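(* Let $n>3$ and consider the complex Poisson algebras with basis $e_1,\dots,e_n$ in which $e_i\cdot e_j=e_{i+j}$ for $2\le i+j\le n-1$, with the listed further nonzero products (up to commutativity/anticommutativity): $\mathcal{P}_{1,1}^n$: none; $\mathcal{P}_{1,2}^n$: $\{e_1,e_n\}=e_n$; $\mathcal{P}_{1,3}^n$: $\{e_1,e_n\}=e_{n-1}$; $\mathcal{P}_{1,4}^n$: $e_n\cdot e_n=e_{n-1}$; $\mathcal{P}_{1,5}^n$: $e_n\cdot e_n=e_{n-1}$, $\{e_1,e_n\}=e_{n-1}$. Let $\varphi$ be a derivation of $\mathcal{P}$. Then, for $2\le i\le n-1$: (a) if $\mathcal{P}=\mathcal{P}_{1,1}^n$: $\varphi(e_1)=\sum_{k=1}^n\lambda_{k,1}e_k$, $\varphi(e_i)=\sum_{k=i}^{n-1}i\lambda_{k-i+1,1}e_k$, $\varphi(e_n)=\lambda_{n-1,n}e_{n-1}+\lambda_{n,n}e_n$ for some $\lambda_{k,1},\lambda_{n-1,n},\lambda_{n,n}\in\mathbb{C}$, and $\dim\mathfrak{Der}(\mathcal{P}_{1,1}^n)=n+2$; (b) if $\mathcal{P}=\mathcal{P}_{1,2}^n$: $\varphi(e_1)=\sum_{k=2}^n\lambda_{k,1}e_k$, $\varphi(e_i)=\sum_{k=i+1}^{n-1}i\lambda_{k-i+1,1}e_k$, $\varphi(e_n)=\lambda_{n,n}e_n$ for some $\lambda_{k,1},\lambda_{n,n}\in\mathbb{C}$, and $\dim\mathfrak{Der}(\mathcal{P}_{1,2}^n)=n$;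 (c) if $\mathcal{P}=\mathcal{P}_{1,3}^n$: $\varphi(e_1)=\sum_{k=1}^n\lambda_{k,1}e_k$, $\varphi(e_i)=\sum_{k=i}^{n-1}i\lambda_{k-i+1,1}e_k$, $\varphi(e_n)=\lambda_{n-1,n}e_{n-1}+(n-2)\lambda_{1,1}e_n$ for some $\lambda_{k,1},\lambda_{n-1,n}\in\mathbb{C}$, and $\dim\mathfrak{Der}(\mathcal{P}_{1,3}^n)=n+1$; (d) if $\mathcal{P}=\mathcal{P}_{1,4}^n$: $\varphi(e_1)=\sum_{k=1}^n\lambda_{k,1}e_k$, $\varphi(e_i)=\sum_{k=i}^{n-1}i\lambda_{k-i+1,1}e_k$, $\varphi(e_n)=-\lambda_{n,1}e_{n-2}+\lambda_{n-1,n}e_{n-1}+\frac{n-1}{2}\lambda_{1,1}e_n$ for some $\lambda_{k,1},\lambda_{n-1,n}\in\mathbb{C}$, and $\dim\mathfrak{Der}(\mathcal{P}_{1,4}^n)=n+1$; (e) if $\mathcal{P}=\mathcal{P}_{1,5}^n$: $\varphi(e_1)=\sum_{k=2}^n\lambda_{k,1}e_k$, $\varphi(e_i)=\sum_{k=i+1}^{n-1}i\lambda_{k-i+1,1}e_k$, $\varphi(e_n)=-\lambda_{n,1}e_{n-2}+\lambda_{n-1,n}e_{n-1}$ for some $\lambda_{k,1},\lambda_{n-1,n}\in\mathbb{C}$, and $\dim\mathfrak{Der}(\mathcal{P}_{1,5}^n)=n$.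
   Context: A derivation of a Poisson algebra $(\mathcal{P},\cdot,\{-,-\})$ is a linear map $\varphi$ with $\varphi(x\cdot y)=\varphi(x)\cdot y+x\cdot\varphi(y)$ and $\varphi(\{x,y\})=\{\varphi(x),y\}+\{x,\varphi(y)\}$ for all $x,y$; $\mathfrak{Der}(\mathcal{P})$ is the Lie algebra of derivations. Indices $k$ in $\lambda_{k,1}$ range over the values appearing in the sums. *)

From mathcomp Require Import all_boot all_order all_algebra.
From mathcomp Require Import complex Rstruct.
Set Implicit Arguments. Unset Strict Implicit. Unset Printing Implicit Defensive.
Import GRing.Theory.
Local Open Scope ring_scope.

Definition C : numClosedFieldType := (Rdefinitions.R)[i].

(* Vectors of the n-dimensional algebra are row vectors of coordinates with
   respect to the basis e_1, ..., e_n.  Basis vector e_k (1-based, as in the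
   paper); e k = 0 when k = 0 or k > n (never used for such k in the tables
   except where the paper's product is zero). *)
Definition e (n k : nat) : 'rV[C]_n := \row_(j < n) (j.+1 == k)%:R.

Definition bil (n : nat) (m : nat -> nat -> 'rV[C]_n) (x y : 'rV[C]_n)
  : 'rV[C]_n :=
  \sum_(i < n) \sum_(j < n) (x 0 i * y 0 j) *: m i.+1 j.+1.

Inductive kind := P11 | P12 | P13 | P14 | P15.

Definition dotb (n : nat) (p : kind) (i j : nat) : 'rV[C]_n :=
  if (i + j <= n.-1)%N then e n (i + j)
  else if (i == n) && (j == n) && (match p with P14 | P15 => true | _ => false end)
  then e n n.-1
  else 0.

Definition br1n (n : nat) (p : kind) : 'rV[C]_n :=
  match p with
  | P11 => 0
  | P12 => e n n
  | P13 => e n n.-1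
  | P14 => 0
  | P15 => e n n.-1
  end.

Definition brb (n : nat) (p : kind) (i j : nat) : 'rV[C]_n :=
  if (i == 1%N) && (j == n) then br1n n p
  else if (i == n) && (j == 1%N) then - br1n n p
  else 0.

Definition pdot (n : nat) (p : kind) := bil (dotb n p).
Definition pbr (n : nat) (p : kind) := bil (brb n p).

(* A linear map phi is represented by its matrix A: phi(x) = x *m A.
   phi is a derivation of the Poisson algebra. *)
Definition is_derivation (n : nat) (p : kind) (A : 'M[C]_n) : Prop :=
  (forall x y, pdot p x y *m A = pdot p (x *m A) y + pdot p x (y *m A)) /\
  (forall x y, pbr p x y *m A = pbr p (x *m A) y + pbr p x (y *m A)).

Definition dim_Der (n : nat) (p : kind) (d : nat) : Prop :=
  exists U : {vspace 'M[C]_n},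
    (forall A, is_derivation p A <-> A \in U) /\ \dim U = d.

Definition phi_e (n : nat) (A : 'M[C]_n) (k : nat) : 'rV[C]_n := e n k *m A.

From HB Require Import structures.
From mathcomp Require Import all_boot all_order all_algebra.
From mathcomp Require Import complex Rstruct.
From mathcomp Require Import zify ring.
Import GRing.Theory Num.Theory.
Local Open Scope ring_scope.
Set Implicit Arguments. Unset Strict Implicit. Unset Printing Implicit Defensive.

(* Let g i k be the coefficient of e_k in phi(e_i).  The Leibniz rule for
   e_i . e_1 = e_(i+1) gives, by induction on i, phi(e_i) = i sum_k lam_(k-i+1) e_k
   for 1 < i < n, where lam_k := g 1 k, and the rule for e_1 . e_n = 0 kills every
   coefficient of phi(e_n) except those of e_(n-2), e_(n-1), e_n.  Hence every
   derivation has the normal form [der_nf].  The remaining rules (for e_1 . e_n,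
   e_n . e_n and {e_1, e_n}) amount to a few linear conditions on lam_1, lam_n and
   the last row, and conversely every normal form satisfying them is a derivation.
   Solving these conditions for each algebra gives the formulas, and an injective
   linear parametrisation of the solutions by C^d gives dim Der(P) = d. *)

Section BilinearTable.
Variables (n : nat) (mt : nat -> nat -> 'rV[C]_n).

Lemma bil_coord x y c :
  bil mt x y 0 c = \sum_(i < n) \sum_(j < n) x 0 i * y 0 j * mt i.+1 j.+1 0 c.
Proof.
rewrite summxE; apply: eq_bigr => i _.
by rewrite summxE; apply: eq_bigr => j _; rewrite mxE.
Qed.

Lemma bil_delta_r x b : bil mt x (delta_mx 0 b) = \sum_(i < n) x 0 i *: mt i.+1 b.+1.
Proof.
apply: eq_bigr => i _; rewrite (bigD1 b) //= big1 ?addr0 => [|j /negbTE nj].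
  by rewrite mxE !eqxx mulr1.
by rewrite mxE nj mulr0 scale0r.
Qed.

Lemma bil_delta_l a y : bil mt (delta_mx 0 a) y = \sum_(j < n) y 0 j *: mt a.+1 j.+1.
Proof.
rewrite /bil (bigD1 a) //= [X in _ + X]big1 ?addr0 => [|i ni].
  by apply: eq_bigr => j _; rewrite mxE !eqxx mul1r.
by rewrite big1 // => j _; rewrite mxE (negbTE ni) mul0r scale0r.
Qed.

Lemma bil_delta a b : bil mt (delta_mx 0 a) (delta_mx 0 b) = mt a.+1 b.+1.
Proof.
rewrite bil_delta_l (bigD1 b) //= big1 ?addr0 => [|j /negbTE nj].
  by rewrite mxE !eqxx scale1r.
by rewrite mxE nj scale0r.
Qed.

Definition der_on_basis (A : 'M[C]_n) (a b : 'I_n) : Prop :=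
  mt a.+1 b.+1 *m A = bil mt (row a A) (delta_mx 0 b) + bil mt (delta_mx 0 a) (row b A).

Lemma mulmx_bil_coord x y (A : 'M[C]_n) c :
  (bil mt x y *m A) 0 c =
  \sum_(i < n) \sum_(j < n) x 0 i * y 0 j * (mt i.+1 j.+1 *m A) 0 c.
Proof.
rewrite mxE; under eq_bigr do rewrite bil_coord big_distrl /=.
rewrite exchange_big; apply: eq_bigr => i _.
under eq_bigr do rewrite big_distrl /=.
rewrite exchange_big; apply: eq_bigr => j _.
by rewrite mxE big_distrr; apply: eq_bigr => k _ /=; rewrite mulrA.
Qed.

Lemma bil_mulmxl_coord x y (A : 'M[C]_n) c :
  bil mt (x *m A) y 0 c =
  \sum_(i < n) \sum_(j < n) x 0 i * y 0 j * bil mt (row i A) (delta_mx 0 j) 0 c.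
Proof.
rewrite bil_coord; under eq_bigr do under eq_bigr do rewrite mxE !big_distrl /=.
under eq_bigr do rewrite exchange_big /=.
rewrite exchange_big; apply: eq_bigr => i _.
rewrite exchange_big; apply: eq_bigr => j _.
rewrite bil_delta_r summxE big_distrr; apply: eq_bigr => k _ /=.
by rewrite !mxE; ring.
Qed.

Lemma bil_mulmxr_coord x y (A : 'M[C]_n) c :
  bil mt x (y *m A) 0 c =
  \sum_(i < n) \sum_(j < n) x 0 i * y 0 j * bil mt (delta_mx 0 i) (row j A) 0 c.
Proof.
rewrite bil_coord; apply: eq_bigr => i _.
under eq_bigr do rewrite mxE big_distrr big_distrl /=.
rewrite exchange_big; apply: eq_bigr => j _.
rewrite bil_delta_l summxE big_distrr; apply: eq_bigr => k _ /=.
by rewrite !mxE; ring.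
Qed.

Lemma bil_derivationP A :
  (forall x y, bil mt x y *m A = bil mt (x *m A) y + bil mt x (y *m A)) <->
  (forall a b, der_on_basis A a b).
Proof.
split=> [D a b | D x y].
  by have := D (delta_mx 0 a) (delta_mx 0 b); rewrite bil_delta -!rowE.
apply/rowP => c; rewrite mulmx_bil_coord [RHS]mxE bil_mulmxl_coord bil_mulmxr_coord.
rewrite -big_split; apply: eq_bigr => i _; rewrite -big_split; apply: eq_bigr => j _.
by rewrite D mxE mulrDr.
Qed.

End BilinearTable.

Section PoissonTables.
Variable m : nat.
Local Notation n := m.+4.

Definition coef (A : 'M[C]_n) (i k : nat) : C := A (inord i.-1) (inord k.-1).

Lemma coefE (A : 'M[C]_n) (a c : 'I_n) : A a c = coef A a.+1 c.+1.
Proof. by rewrite /coef /= !inord_val. Qed.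

Lemma e_coord k (c : 'I_n) : e n k 0 c = (c.+1 == k)%:R.
Proof. exact: mxE. Qed.

Lemma coefEl (A : 'M[C]_n) i (c : 'I_n) : A (inord i.-1) c = coef A i c.+1.
Proof. by rewrite /coef /= inord_val. Qed.

Lemma coefEr (A : 'M[C]_n) (a : 'I_n) k : A a (inord k.-1) = coef A a.+1 k.
Proof. by rewrite /coef /= inord_val. Qed.

Lemma sum_indicator_r (F : 'I_n -> C) (G : bool) (K : nat) :
  (G -> 0 < K <= n)%N ->
  \sum_(k < n) F k * (G && (k.+1 == K))%:R = if G then F (inord K.-1) else 0.
Proof.
case: G => [/(_ isT) K_n | _]; last by rewrite big1 // => k _; rewrite mulr0.
rewrite (bigD1 (inord K.-1)) //= big1 ?addr0.
  by rewrite inordK; [rewrite prednK ?eqxx ?mulr1 //; lia | lia].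
move=> k nk; case: eqP => [kK|_]; last by rewrite mulr0.
by case/eqP: nk; apply: val_inj; rewrite /= inordK; lia.
Qed.

Lemma sum_indicator_l (F : 'I_n -> C) (G : bool) (K : nat) :
  (G -> 0 < K <= n)%N ->
  \sum_(k < n) (G && (k.+1 == K))%:R * F k = if G then F (inord K.-1) else 0.
Proof.
by move=> GK; rewrite -(sum_indicator_r F GK); apply: eq_bigr => k _; rewrite mulrC.
Qed.

Definition has_sq (p : kind) : bool := match p with P14 | P15 => true | _ => false end.

Lemma dotb_coord p i j (c : 'I_n) :
  dotb n p i j 0 c =
  ((i + j <= n.-1)%N && (c.+1 == i + j)%N)%:R +
  ([&& has_sq p, i == n & j == n] && (c.+1 == n.-1))%:R.
Proof.
rewrite /dotb -/(has_sq p); case: ifP => ij.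
  rewrite e_coord /=; case: (has_sq p); rewrite /= ?addr0 //.
  by rewrite (_ : [&& i == n & j == n] = false) ?addr0 //; lia.
rewrite /= add0r; case: ifP => [/andP [/andP [/eqP -> /eqP ->] ->]|].
  by rewrite e_coord !eqxx.
by rewrite mxE; case: (has_sq p); case: (i == n); case: (j == n).
Qed.

Lemma dotbC p i j : dotb n p i j = dotb n p j i.
Proof. by rewrite /dotb addnC [(j == n) && _]andbC. Qed.

Lemma dotb_coord_l p i j (c : 'I_n) :
  dotb n p i.+1 j 0 c =
  ((j < c.+1 <= n.-1)%N && (i.+1 == c.+1 - j)%N)%:R +
  ([&& has_sq p, j == n & c.+1 == n.-1] && (i.+1 == n))%:R.
Proof. by rewrite dotb_coord; congr (_%:R + _%:R); lia. Qed.

(* The e_k-coordinate of phi(e_i . e_j) = phi(e_i) . e_j + e_i . phi(e_j), where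
   g i k is the e_k-coefficient of phi(e_i) and sq tells whether e_n . e_n = e_(n-1). *)
Definition dot_leibniz (sq : bool) (g : nat -> nat -> C) (i j k : nat) : Prop :=
  (if (i + j <= n.-1)%N then g (i + j)%N k else 0) +
  (if [&& sq, i == n & j == n] then g n.-1 k else 0) =
  ((if (j < k <= n.-1)%N then g i (k - j)%N else 0) +
   (if [&& sq, j == n & k == n.-1] then g i n else 0)) +
  ((if (i < k <= n.-1)%N then g j (k - i)%N else 0) +
   (if [&& sq, i == n & k == n.-1] then g j n else 0)).

Lemma mulmx_dotb_coord p (A : 'M[C]_n) (a b c : 'I_n) :
  (dotb n p a.+1 b.+1 *m A) 0 c =
  (if (a.+1 + b.+1 <= n.-1)%N then coef A (a.+1 + b.+1) c.+1 else 0) +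
  (if [&& has_sq p, a.+1 == n & b.+1 == n] then coef A n.-1 c.+1 else 0).
Proof.
rewrite mxE; under eq_bigr do rewrite dotb_coord mulrDl.
by rewrite big_split /= !(sum_indicator_l (fun k => A k c)) ?coefEl //; lia.
Qed.

Lemma bil_row_dotb_coord p (A : 'M[C]_n) (a b c : 'I_n) :
  bil (dotb n p) (row a A) (delta_mx 0 b) 0 c =
  (if (b.+1 < c.+1 <= n.-1)%N then coef A a.+1 (c.+1 - b.+1) else 0) +
  (if [&& has_sq p, b.+1 == n & c.+1 == n.-1] then coef A a.+1 n else 0).
Proof.
rewrite bil_delta_r summxE; under eq_bigr do rewrite !mxE dotb_coord_l mulrDr.
by rewrite big_split /= !(sum_indicator_r (fun k => A a k)) ?coefEr //; lia.
Qed.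

Lemma bil_dotb_row_coord p (A : 'M[C]_n) (a b c : 'I_n) :
  bil (dotb n p) (delta_mx 0 a) (row b A) 0 c =
  (if (a.+1 < c.+1 <= n.-1)%N then coef A b.+1 (c.+1 - a.+1) else 0) +
  (if [&& has_sq p, a.+1 == n & c.+1 == n.-1] then coef A b.+1 n else 0).
Proof.
rewrite bil_delta_l summxE; under eq_bigr do rewrite !mxE dotbC dotb_coord_l mulrDr.
by rewrite big_split /= !(sum_indicator_r (fun k => A b k)) ?coefEr //; lia.
Qed.

Lemma der_on_basis_dotP p (A : 'M[C]_n) (a b : 'I_n) :
  der_on_basis (dotb n p) A a b <->
  (forall c : 'I_n, dot_leibniz (has_sq p) (coef A) a.+1 b.+1 c.+1).
Proof.
rewrite /der_on_basis; split=> [/rowP E c | E]; last apply/rowP=> c.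
  by move: (E c); rewrite [RHS]mxE mulmx_dotb_coord bil_row_dotb_coord bil_dotb_row_coord.
by rewrite [RHS]mxE mulmx_dotb_coord bil_row_dotb_coord bil_dotb_row_coord; apply: E.
Qed.

Definition has_br (p : kind) : bool :=
  match p with P12 | P13 | P15 => true | _ => false end.

Definition br_index (p : kind) : nat := if p is P12 then n else n.-1.

Lemma br1n_coord p (c : 'I_n) : br1n n p 0 c = (has_br p && (c.+1 == br_index p))%:R.
Proof. by case: p; rewrite /= ?e_coord ?mxE. Qed.

Lemma brb_coord p i j (c : 'I_n) :
  brb n p i j 0 c =
  ((i == 1%N) && (j == n))%:R * br1n n p 0 c - ((i == n) && (j == 1%N))%:R * br1n n p 0 c.
Proof.
rewrite /brb; case: ifP => [ij|_].
  by rewrite (_ : (i == n) && (j == 1%N) = false) ?mul0r ?subr0 ?mul1r //; lia.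
case: ifP => _; first by rewrite mxE mul0r sub0r mul1r.
by rewrite mxE !mul0r subr0.
Qed.

Lemma brb_coord_l p i j (c : 'I_n) :
  brb n p i.+1 j 0 c =
  ((j == n) && (i.+1 == 1%N))%:R * br1n n p 0 c - ((j == 1%N) && (i.+1 == n))%:R * br1n n p 0 c.
Proof. by rewrite brb_coord; congr (_%:R * _ - _%:R * _); lia. Qed.

(* The same for the bracket, when {e_1, e_n} is e_t if hb holds and 0 otherwise. *)
Definition br_leibniz (hb : bool) (t : nat) (g : nat -> nat -> C) (i j k : nat) : Prop :=
  (((i == 1%N) && (j == n))%:R - ((i == n) && (j == 1%N))%:R) * (if hb then g t k else 0) =
  (hb && (k == t))%:R *
  (((if j == n then g i 1%N else 0) - (if j == 1%N then g i n else 0)) +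
   ((if i == 1%N then g j n else 0) - (if i == n then g j 1%N else 0))).

Lemma mulmx_brb_coord p (A : 'M[C]_n) (a b c : 'I_n) :
  (brb n p a.+1 b.+1 *m A) 0 c =
  (((a.+1 == 1%N) && (b.+1 == n))%:R - ((a.+1 == n) && (b.+1 == 1%N))%:R) *
  (if has_br p then coef A (br_index p) c.+1 else 0).
Proof.
rewrite mxE; under eq_bigr do rewrite brb_coord -mulrBl -mulrA br1n_coord.
by rewrite -big_distrr /= sum_indicator_l ?coefEl // => _; case: p => /=; lia.
Qed.

Lemma bil_row_brb_coord p (A : 'M[C]_n) (a b c : 'I_n) :
  bil (brb n p) (row a A) (delta_mx 0 b) 0 c =
  (has_br p && (c.+1 == br_index p))%:R *
  ((if b.+1 == n then coef A a.+1 1 else 0) - (if b.+1 == 1%N then coef A a.+1 n else 0)).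
Proof.
rewrite bil_delta_r summxE.
under eq_bigr do rewrite !mxE brb_coord_l -mulrBl mulrA mulrBr.
by rewrite -big_distrl /= sumrB mulrC br1n_coord !sum_indicator_r ?coefEr // => _; lia.
Qed.

Lemma bil_brb_row_coord p (A : 'M[C]_n) (a b c : 'I_n) :
  bil (brb n p) (delta_mx 0 a) (row b A) 0 c =
  (has_br p && (c.+1 == br_index p))%:R *
  ((if a.+1 == 1%N then coef A b.+1 n else 0) - (if a.+1 == n then coef A b.+1 1 else 0)).
Proof.
rewrite bil_delta_l summxE.
under eq_bigr do rewrite !mxE brb_coord -mulrBl mulrA mulrBr.
by rewrite -big_distrl /= sumrB mulrC br1n_coord !sum_indicator_r ?coefEr // => _; lia.
Qed.

Lemma der_on_basis_brP p (A : 'M[C]_n) (a b : 'I_n) :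
  der_on_basis (brb n p) A a b <->
  (forall c : 'I_n, br_leibniz (has_br p) (br_index p) (coef A) a.+1 b.+1 c.+1).
Proof.
rewrite /der_on_basis; split=> [/rowP E c | E]; last apply/rowP=> c.
  move: (E c); rewrite [RHS]mxE mulmx_brb_coord bil_row_brb_coord bil_brb_row_coord.
  by rewrite -mulrDr.
rewrite [RHS]mxE mulmx_brb_coord bil_row_brb_coord bil_brb_row_coord -mulrDr.
exact: E.
Qed.

Lemma is_derivationP p (A : 'M[C]_n) :
  is_derivation p A <->
  (forall i j k, (0 < i <= n)%N -> (0 < j <= n)%N -> (0 < k <= n)%N ->
     dot_leibniz (has_sq p) (coef A) i j k /\ br_leibniz (has_br p) (br_index p) (coef A) i j k).
Proof.
rewrite /is_derivation /pdot /pbr !bil_derivationP; split.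
  move=> [D B] [//|i] [//|j] [//|k] /= i_n j_n k_n.
  have /der_on_basis_dotP/(_ (Ordinal k_n)) := D (Ordinal i_n) (Ordinal j_n).
  by have /der_on_basis_brP/(_ (Ordinal k_n)) := B (Ordinal i_n) (Ordinal j_n).
move=> E; split=> a b; [apply/der_on_basis_dotP | apply/der_on_basis_brP] => c;
  by have [] := E a.+1 b.+1 c.+1 (ltn_ord a) (ltn_ord b) (ltn_ord c).
Qed.

End PoissonTables.

Ltac decide_bool b :=
  lazymatch b with
  | true => fail
  | false => fail
  | _ => let E := fresh "E" in
         first [ have E : b = true by lia | have E : b = false by lia ];
         rewrite E; clear E
  end.

Ltac decide_conditions :=
  repeat match goal with
  | |- context [if ?b then _ else _] => decide_bool b
  | |- context [nat_of_bool ?b] => decide_bool b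
  end; simpl.

Section NormalForm.
Variable m : nat.
Local Notation n := m.+4.
Variables (lam : nat -> C) (al be ga : C).

(* [der_nf i k] is the coefficient of e_k in phi(e_i) for a derivation in normal form:
   [lam k] is the paper's lambda_(k,1), and al, be, ga are the coefficients of
   e_(n-2), e_(n-1), e_n in phi(e_n). *)
Definition der_nf (i k : nat) : C :=
  if i == 1%N then lam k
  else if i == n then
    (if k == n.-2 then al else if k == n.-1 then be else if k == n then ga else 0)
  else if (i <= k <= n.-1)%N then i%:R * lam (k - i + 1) else 0.

Local Notation g := der_nf.

Lemma der_nf_row i k : (0 < i < n)%N -> (0 < k <= n.-1)%N ->
  g i k = if (i <= k)%N then i%:R * lam (k - i + 1) else 0.
Proof.
rewrite /der_nf => i_n k_n; case: eqP => [->|_].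
  by decide_conditions; rewrite mul1r subnK //; lia.
by decide_conditions; case: leqP => ik; decide_conditions.
Qed.

Lemma der_nf_row_n i : (1 < i < n)%N -> g i n = 0.
Proof. by move=> i_n; rewrite /der_nf; decide_conditions. Qed.

Lemma der_nf_row_1 i : (1 < i < n)%N -> g i 1%N = 0.
Proof. by move=> i_n; rewrite /der_nf; decide_conditions. Qed.

Lemma der_nf_last k :
  g n k = if k == n.-2 then al else if k == n.-1 then be else if k == n then ga else 0.
Proof. by rewrite /der_nf /= eqxx. Qed.

Lemma der_nf_guard (G : bool) i k : (G -> (0 < i < n) && (0 < k <= n.-1))%N ->
  (if G then g i k else 0) = if G && (i <= k)%N then i%:R * lam (k - i + 1) else 0.
Proof. by case: G => //= /(_ isT) /andP [i_n k_n]; rewrite der_nf_row. Qed.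

Lemma dot_leibniz_sym sq h i j k : dot_leibniz m sq h i j k -> dot_leibniz m sq h j i k.
Proof.
rewrite /dot_leibniz; have -> : [&& sq, j == n & i == n] = [&& sq, i == n & j == n].
  by case: sq; case: (i == n); case: (j == n).
by rewrite addnC => ->; rewrite addrC.
Qed.

Lemma der_nf_dot_leibniz_mid sq i j k :
  (0 < i < n)%N -> (0 < j < n)%N -> (0 < k <= n)%N -> dot_leibniz m sq g i j k.
Proof.
move=> i_n j_n k_n; rewrite /dot_leibniz; decide_conditions.
have [->|k_lt] := eqVneq k n.
  by decide_conditions; case: ifP => ij; rewrite ?der_nf_row_n ?addr0 //; lia.
rewrite !addr0 (@der_nf_guard _ (i + j)) 1?(@der_nf_guard _ i) 1?(@der_nf_guard _ j); try lia.
case: (leqP (i + j) k) => ijk; decide_conditions; last by rewrite !addr0.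
rewrite (_ : k - j - i = k - (i + j))%N 1?(_ : k - i - j = k - (i + j))%N; try lia.
by rewrite -mulrDl -natrD addnC.
Qed.

Lemma der_nf_dot_leibniz_last_mid (sq : bool) j k : al = - (if sq then lam n else 0) ->
  (0 < j < n)%N -> (0 < k <= n)%N -> dot_leibniz m sq g n j k.
Proof.
move=> al_E j_n k_n; rewrite /dot_leibniz; decide_conditions; rewrite der_nf_last.
have [->|j1] := eqVneq j 1.
  have [->|kn1] := eqVneq k n.-1.
    by decide_conditions; rewrite /der_nf /= al_E; case: (sq); rewrite /= ?eqxx /=; ring.
  by case: ifP => jk; decide_conditions; case: (sq); rewrite /= ?eqxx /=; ring.
rewrite der_nf_row_n; last by lia.
by case: ifP => jk; decide_conditions; rewrite if_same; ring.
Qed.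

Lemma der_nf_dot_leibniz_last_last (sq : bool) k : (sq -> ga + ga = n.-1%:R * lam 1%N) ->
  (0 < k <= n)%N -> dot_leibniz m sq g n n k.
Proof.
move=> ga_E k_n; rewrite /dot_leibniz; decide_conditions.
case: sq ga_E => [/(_ isT) ga_E|_] /=; last by rewrite !addr0.
have [->|kn] := eqVneq k n.
  by decide_conditions; rewrite der_nf_row_n; [rewrite !addr0 | lia].
rewrite der_nf_row; [|lia|lia].
have [->|kn1] := eqVneq k n.-1; decide_conditions; last by rewrite !addr0.
by rewrite der_nf_last; decide_conditions; rewrite !add0r ga_E subnn.
Qed.

Lemma der_nf_dot_leibniz sq : al = - (if sq then lam n else 0) ->
  (sq -> ga + ga = n.-1%:R * lam 1%N) ->
  forall i j k, (0 < i <= n)%N -> (0 < j <= n)%N -> (0 < k <= n)%N -> dot_leibniz m sq g i j k.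
Proof.
move=> al_E ga_E i j k i_n j_n k_n.
have [->|i_lt] := eqVneq i n; have [->|j_lt] := eqVneq j n.
- exact: der_nf_dot_leibniz_last_last.
- by apply: der_nf_dot_leibniz_last_mid => //; lia.
- by apply/dot_leibniz_sym/der_nf_dot_leibniz_last_mid => //; lia.
- by apply: der_nf_dot_leibniz_mid; lia.
Qed.

Lemma der_nf_br_leibniz (hb : bool) t :
  (hb -> forall k, (0 < k <= n)%N -> g t k = (k == t)%:R * (lam 1%N + ga)) ->
  forall i j k, (0 < i <= n)%N -> (0 < j <= n)%N -> (0 < k <= n)%N -> br_leibniz m hb t g i j k.
Proof.
move=> br_t i j k i_n j_n k_n; rewrite /br_leibniz.
case: hb br_t => [/(_ isT k k_n) -> | _]; last by rewrite mulr0 mul0r.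
have [->|i1] := eqVneq i 1.
  have [->|jn] := eqVneq j n; first by rewrite der_nf_last /der_nf /=; decide_conditions; ring.
  have [->|j1] := eqVneq j 1; first by decide_conditions; ring.
  by decide_conditions; rewrite der_nf_row_n; [ring | lia].
have [->|i_lt] := eqVneq i n.
  have [->|j1] := eqVneq j 1; first by rewrite der_nf_last /der_nf /=; decide_conditions; ring.
  have [->|jn] := eqVneq j n; first by decide_conditions; ring.
  by decide_conditions; rewrite der_nf_row_1; [ring | lia].
by decide_conditions; rewrite der_nf_row_1 ?der_nf_row_n ?if_same; [ring | lia | lia].
Qed.

End NormalForm.

Section ForcedNormalForm.
Variable m : nat.
Local Notation n := m.+4.
Variables (sq hb : bool) (t : nat) (g : nat -> nat -> C).
Hypothesis dot_g : forall i j k,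
  (0 < i <= n)%N -> (0 < j <= n)%N -> (0 < k <= n)%N -> dot_leibniz m sq g i j k.
Hypothesis br_g : forall i j k,
  (0 < i <= n)%N -> (0 < j <= n)%N -> (0 < k <= n)%N -> br_leibniz m hb t g i j k.

Lemma forced_row i : (0 < i < n)%N -> forall k, (0 < k <= n.-1)%N ->
  g i k = if (i <= k)%N then i%:R * g 1%N (k - i + 1) else 0.
Proof.
elim: i => [//|i IH] i_n k k_n.
have [->|i0] := eqVneq i 0; first by decide_conditions; rewrite mul1r subnK //; lia.
have : dot_leibniz m sq g i 1%N k by apply: dot_g; lia.
rewrite /dot_leibniz; decide_conditions; rewrite !addr0 addn1 => ->.
have [->|k1] := eqVneq k 1; first by decide_conditions; rewrite addr0.
rewrite IH; [|lia|lia].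
case: (leqP i.+1 k) => ik; decide_conditions; last by rewrite addr0.
rewrite (_ : k - 1 - i + 1 = k - i.+1 + 1)%N 1?(_ : k - i = k - i.+1 + 1)%N; try lia.
by rewrite mulrSr mulrDl mul1r.
Qed.

Lemma forced_row_n i : (1 < i < n)%N -> g i n = 0.
Proof.
move=> i_n; have : dot_leibniz m sq g i.-1 1 n by apply: dot_g; lia.
rewrite /dot_leibniz; decide_conditions.
by rewrite addn1 prednK ?addr0 //; lia.
Qed.

Lemma forced_last_low k : (0 < k < n.-2)%N -> g n k = 0.
Proof.
move=> k_n; have : dot_leibniz m sq g 1%N n k.+1 by apply: dot_g; lia.
rewrite /dot_leibniz; decide_conditions.
by rewrite subn1 /= !addr0 !add0r.
Qed.

Lemma forced_last_al : g n n.-2 = - (if sq then g 1%N n else 0).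
Proof.
have : dot_leibniz m sq g 1%N n n.-1 by apply: dot_g; lia.
rewrite /dot_leibniz; decide_conditions; rewrite !eqxx !andbT subn1 /= !addr0 !add0r addrC.
by move=> /esym/eqP; rewrite addr_eq0 => /eqP.
Qed.

Lemma forced_last_ga : sq -> g n n + g n n = n.-1%:R * g 1%N 1%N.
Proof.
move=> sq_true; have : dot_leibniz m sq g n n n.-1 by apply: dot_g; lia.
rewrite /dot_leibniz sq_true !eqxx; decide_conditions.
by rewrite forced_row; [decide_conditions; rewrite subnn !add0r => <- | lia | lia].
Qed.

Lemma forced_br_row : hb -> forall k, (0 < k <= n)%N -> g t k = (k == t)%:R * (g 1%N 1%N + g n n).
Proof.
move=> hb_true k k_n; have : br_leibniz m hb t g 1%N n k by apply: br_g; lia.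
by rewrite /br_leibniz hb_true; decide_conditions; rewrite subr0 mul1r => ->; congr (_ * _); ring.
Qed.

Lemma forced_der_nf i k : (0 < i <= n)%N -> (0 < k <= n)%N ->
  g i k = der_nf m (g 1%N) (g n n.-2) (g n n.-1) (g n n) i k.
Proof.
move=> i_n k_n; have [->|i1] := eqVneq i 1; first by [].
have [->|i_lt] := eqVneq i n.
  rewrite (der_nf_last m (g 1%N)); have [->|k2] := eqVneq k n.-2; first by [].
  have [->|k1] := eqVneq k n.-1; first by decide_conditions.
  have [->|kn] := eqVneq k n; first by decide_conditions.
  by decide_conditions; rewrite forced_last_low //; lia.
have [->|k_lt] := eqVneq k n.
  by rewrite (der_nf_row_n (g 1%N)) ?forced_row_n //; lia.
rewrite (der_nf_row (g 1%N)); [|lia|lia].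
by rewrite forced_row //; lia.
Qed.

End ForcedNormalForm.

Section Classification.
Variable m : nat.
Local Notation n := m.+4.

Definition der_nf_mx (lam : nat -> C) (al be ga : C) : 'M[C]_n :=
  \matrix_(a, c) der_nf m lam al be ga a.+1 c.+1.

Lemma coef_der_nf_mx lam al be ga i k : (0 < i <= n)%N -> (0 < k <= n)%N ->
  coef (der_nf_mx lam al be ga) i k = der_nf m lam al be ga i k.
Proof. by move=> i_n k_n; rewrite /coef mxE !inordK ?prednK //; lia. Qed.

Lemma der_nf_mx_coef (A : 'M[C]_n) lam al be ga :
  (forall i k, (0 < i <= n)%N -> (0 < k <= n)%N -> coef A i k = der_nf m lam al be ga i k) ->
  A = der_nf_mx lam al be ga.
Proof. by move=> E; apply/matrixP => a c; rewrite coefE mxE E ?ltn_ord. Qed.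

Lemma dot_leibniz_ext sq (g1 g2 : nat -> nat -> C) i j k :
  (forall x y, (0 < x <= n)%N -> (0 < y <= n)%N -> g1 x y = g2 x y) ->
  (0 < i <= n)%N -> (0 < j <= n)%N -> (0 < k <= n)%N ->
  dot_leibniz m sq g1 i j k -> dot_leibniz m sq g2 i j k.
Proof.
move=> E i_n j_n k_n.
have ifE (G : bool) x y : (G -> (0 < x <= n) && (0 < y <= n))%N ->
    (if G then g1 x y else 0) = (if G then g2 x y else 0).
  by case: G => // /(_ isT) /andP [x_n y_n]; rewrite E.
rewrite /dot_leibniz (ifE _ (i + j)%N) 1?(ifE _ n.-1) 1?(ifE _ i (k - j)%N) 1?(ifE _ i n)
  1?(ifE _ j (k - i)%N) 1?(ifE _ j n) //; lia.
Qed.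

Lemma br_leibniz_ext hb t (g1 g2 : nat -> nat -> C) i j k :
  (forall x y, (0 < x <= n)%N -> (0 < y <= n)%N -> g1 x y = g2 x y) ->
  (0 < t <= n)%N -> (0 < i <= n)%N -> (0 < j <= n)%N -> (0 < k <= n)%N ->
  br_leibniz m hb t g1 i j k -> br_leibniz m hb t g2 i j k.
Proof. by move=> E t_n i_n j_n k_n; rewrite /br_leibniz !E //; lia. Qed.

Lemma br_index_range p : (0 < br_index m p <= n)%N.
Proof. by case: p => /=; lia. Qed.

Definition nf_conditions p (lam : nat -> C) (al be ga : C) : Prop :=
  [/\ al = - (if has_sq p then lam n else 0),
      has_sq p -> ga + ga = n.-1%:R * lam 1%N &
      has_br p -> forall k, (0 < k <= n)%N ->
        der_nf m lam al be ga (br_index m p) k = (k == br_index m p)%:R * (lam 1%N + ga)].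

Lemma is_derivation_nfP p (A : 'M[C]_n) :
  is_derivation p A <->
  exists lam al be ga, A = der_nf_mx lam al be ga /\ nf_conditions p lam al be ga.
Proof.
have t_n := br_index_range p.
split=> [/is_derivationP D | [lam [al [be [ga [-> [al_E ga_E br_E]]]]]]].
  have dot_A i j k i_n j_n k_n := (D i j k i_n j_n k_n).1.
  have br_A i j k i_n j_n k_n := (D i j k i_n j_n k_n).2.
  have nf_A := forced_der_nf dot_A.
  exists (coef A 1), (coef A n n.-2), (coef A n n.-1), (coef A n n).
  split; first exact: der_nf_mx_coef.
  split; [exact: forced_last_al dot_A | exact: forced_last_ga dot_A |].
  by move=> hb k k_n; rewrite -nf_A // (forced_br_row br_A).
apply/is_derivationP => i j k i_n j_n k_n.
have E x y : (0 < x <= n)%N -> (0 < y <= n)%N ->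
    der_nf m lam al be ga x y = coef (der_nf_mx lam al be ga) x y.
  by move=> x_n y_n; rewrite coef_der_nf_mx.
split; first by apply: (dot_leibniz_ext E) => //; apply: der_nf_dot_leibniz.
by apply: (br_leibniz_ext E) => //; apply: der_nf_br_leibniz.
Qed.

Lemma last_row_brP lam al be ga :
  (forall k, (0 < k <= n)%N -> der_nf m lam al be ga n k = (k == n)%:R * (lam 1%N + ga)) <->
  [/\ al = 0, be = 0 & lam 1%N = 0].
Proof.
split=> [E | [-> -> l1] k k_n]; last first.
  rewrite der_nf_last l1 add0r.
  have [->|k2] := eqVneq k n.-2; first by decide_conditions; rewrite mul0r.
  have [->|k1] := eqVneq k n.-1; first by decide_conditions; rewrite mul0r.
  by have [_|kn] := eqVneq k n; decide_conditions; rewrite ?mul1r ?mul0r.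
move: (E n.-2 ltac:(lia)) (E n.-1 ltac:(lia)) (E n ltac:(lia)).
rewrite !der_nf_last; decide_conditions; rewrite !mul0r mul1r => -> -> ga_E.
by split => //; apply: (addIr ga); rewrite add0r -ga_E.
Qed.

Lemma penult_row_brP lam al be ga :
  (forall k, (0 < k <= n)%N ->
     der_nf m lam al be ga n.-1 k = (k == n.-1)%:R * (lam 1%N + ga)) <->
  ga = (n - 2)%:R * lam 1%N.
Proof.
have row k : (0 < k <= n)%N -> der_nf m lam al be ga n.-1 k = (k == n.-1)%:R * (n.-1%:R * lam 1%N).
  move=> k_n; have [->|kn] := eqVneq k n.
    by rewrite der_nf_row_n; [decide_conditions; ring | lia].
  rewrite der_nf_row; [|lia|lia].
  by have [->|kn1] := eqVneq k n.-1; decide_conditions; rewrite ?subnn ?mul1r ?mul0r.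
rewrite (_ : n - 2 = m.+2)%N //; split=> [E | ga_E k k_n].
  move: (E n.-1 ltac:(lia)); rewrite row; [decide_conditions | lia].
  by rewrite !mul1r => E1; apply: (addrI (lam 1%N)); rewrite -E1; ring.
by rewrite row; [rewrite /= ga_E; congr (_ * _); ring | lia].
Qed.

Definition admissible p (lam : nat -> C) (al be ga : C) : Prop :=
  match p with
  | P11 => al = 0
  | P12 => [/\ al = 0, be = 0 & lam 1%N = 0]
  | P13 => al = 0 /\ ga = (n - 2)%:R * lam 1%N
  | P14 => al = - lam n /\ ga = n.-1%:R / 2%:R * lam 1%N
  | P15 => [/\ al = - lam n, ga = 0 & lam 1%N = 0]
  end.

Lemma nf_conditionsE p lam al be ga :
  nf_conditions p lam al be ga <-> admissible p lam al be ga.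
Proof.
rewrite /nf_conditions; case: p => /=; rewrite ?oppr0.
- by split=> [[] | ->].
- split=> [[-> _ /(_ isT)/last_row_brP] // | [-> be0 l1]].
  by split=> // _; apply/last_row_brP.
- split=> [[-> _ /(_ isT)/penult_row_brP] // | [-> ga_E]].
  by split=> // _; apply/penult_row_brP.
- split=> [[-> /(_ isT) ga2 _] | [-> ga_E]].
    split=> //; rewrite [LHS](_ : ga = (ga + ga) / 2%:R); last by field.
    by rewrite ga2 mulrAC.
  by split=> // _; rewrite ga_E; field.
- split=> [[-> /(_ isT) ga2 /(_ isT)/penult_row_brP ga_E] | [-> -> l1]].
    have l1 : lam 1%N = 0.
      have : m.+1%:R * lam 1%N = 0.
        by rewrite -[RHS](subrr (ga + ga)) {2}ga2 ga_E (_ : n - 2 = m.+2)%N //=; ring.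
      by move/eqP; rewrite mulf_eq0 pnatr_eq0 => /eqP.
    by split=> //; rewrite ga_E l1 mulr0.
  by split=> // _; [rewrite l1 mulr0 addr0 | apply/penult_row_brP; rewrite l1 mulr0].
Qed.

Lemma derivationP p (A : 'M[C]_n) :
  is_derivation p A <->
  exists lam al be ga, A = der_nf_mx lam al be ga /\ admissible p lam al be ga.
Proof.
rewrite is_derivation_nfP; split=> -[lam [al [be [ga [-> c]]]]];
  by exists lam, al, be, ga; split=> //; apply/nf_conditionsE.
Qed.

End Classification.

Section BasisImages.
Variable m : nat.
Local Notation n := m.+4.

Lemma phi_e_coord (A : 'M[C]_n) i (c : 'I_n) : (0 < i <= n)%N -> phi_e A i 0 c = coef A i c.+1.
Proof.
move=> i_n; rewrite /phi_e mxE; under eq_bigr do rewrite e_coord -[(_ == i)]andTb.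
by rewrite sum_indicator_l ?coefEl.
Qed.

Lemma sum_e_coord lo hi (w : nat -> C) (c : 'I_n) :
  (\sum_(lo <= k < hi) w k *: e n k) 0 c = if (lo <= c.+1 < hi)%N then w c.+1 else 0.
Proof.
rewrite summxE; under eq_big_nat => k _ do rewrite mxE e_coord mulr_natr mulrb eq_sym.
by rewrite -big_mkcond big_nat1_eq.
Qed.

Variables (lam : nat -> C) (al be ga : C).
Local Notation A := (der_nf_mx m lam al be ga).

Lemma phi_e_der_nf_mx :
  [/\ phi_e A 1 = \sum_(1 <= k < n.+1) lam k *: e n k,
      forall i, (2 <= i <= n.-1)%N ->
        phi_e A i = \sum_(i <= k < n) (i%:R * lam (k - i + 1)%N) *: e n k &
      phi_e A n = al *: e n (n - 2) + be *: e n n.-1 + ga *: e n n].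
Proof.
split=> [|i i_n|]; apply/rowP => c; have c_n := ltn_ord c.
- by rewrite phi_e_coord // sum_e_coord coef_der_nf_mx //; decide_conditions.
- rewrite phi_e_coord ?sum_e_coord ?coef_der_nf_mx; try lia.
  have [cn|cn] := eqVneq c.+1 n; first by rewrite cn der_nf_row_n; [decide_conditions | lia].
  by rewrite der_nf_row; [case: (leqP i c.+1) => ?; decide_conditions | lia | lia].
- rewrite phi_e_coord ?coef_der_nf_mx ?der_nf_last ?mxE ?e_coord //; try lia.
  have [->|c2] := eqVneq c.+1 n.-2; first by decide_conditions; ring.
  have [->|c1] := eqVneq c.+1 n.-1; first by decide_conditions; ring.
  by have [_|cn] := eqVneq c.+1 n; decide_conditions; ring.
Qed.

Lemma phi_e_der_nf_mx_shift : lam 1%N = 0 ->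
  [/\ phi_e A 1 = \sum_(2 <= k < n.+1) lam k *: e n k,
      forall i, (2 <= i <= n.-1)%N ->
        phi_e A i = \sum_(i.+1 <= k < n) (i%:R * lam (k - i + 1)%N) *: e n k &
      phi_e A n = al *: e n (n - 2) + be *: e n n.-1 + ga *: e n n].
Proof.
move=> l1; have [phi1 phii phin] := phi_e_der_nf_mx; split=> // [|i i_n].
  by rewrite phi1 big_ltn // l1 scale0r add0r.
by rewrite phii // big_ltn ?subnn ?l1 ?mulr0 ?scale0r ?add0r //; lia.
Qed.

End BasisImages.

Section Dimension.
Variable m : nat.
Local Notation n := m.+4.

Lemma dim_Der_param p d (P : 'rV[C]_d -> 'M[C]_n) :
  linear P -> (forall v, P v = 0 -> v = 0) ->
  (forall A, is_derivation p A <-> exists v, A = P v) -> dim_Der n p d.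
Proof.
move=> P_lin P_0 DP.
pose PL : {linear 'rV[C]_d -> 'M[C]_n} := HB.pack P (GRing.isLinear.Build C _ _ _ P P_lin).
exists (limg (linfun PL)); split=> [A|].
  rewrite DP; split=> [[v ->] | /memv_imgP [v _ ->]]; last by exists v; rewrite lfunE.
  by rewrite -[P v](lfunE PL) memv_img ?memvf.
have /lker0P/eqP ker0 : injective (linfun PL).
  move=> u v; rewrite !lfunE /= => /eqP; rewrite -subr_eq0 -(linearB PL) => /eqP/P_0/eqP.
  by rewrite subr_eq0 => /eqP.
by rewrite limg_dim_eq ?ker0 ?capv0 // dimvf dim_matrix mul1r.
Qed.

(* A parameter vector starts with lam_s, ..., lam_n (and lam_k = 0 for k < s);
   its remaining entries are the free parameters of the last row. *)
Definition lam_of_row d (s : nat) (v : 'rV[C]_d.+1) (k : nat) : C :=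
  if (s <= k)%N then v 0 (inord (k - s)) else 0.

Definition row_of_lam d (s : nat) (lam extra : nat -> C) : 'rV[C]_d :=
  \row_j (if (j + s <= n)%N then lam (j + s)%N else extra j).

Lemma lam_of_row_linear d s a (u v : 'rV[C]_d.+1) k :
  lam_of_row s (a *: u + v) k = a * lam_of_row s u k + lam_of_row s v k.
Proof. by rewrite /lam_of_row; case: ifP => _; rewrite ?mxE //; ring. Qed.

Lemma lam_of_row_eq0 d s (v : 'rV[C]_d.+1) (j : 'I_d.+1) :
  (forall k, (0 < k <= n)%N -> lam_of_row s v k = 0) -> (0 < s)%N -> (j + s <= n)%N -> v 0 j = 0.
Proof.
move=> v0 s0 js; have := v0 (j + s)%N ltac:(lia).
by rewrite /lam_of_row leq_addl addnK inord_val.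
Qed.

Lemma lam_of_row_of_lam d s lam extra k : (n < d.+1 + s)%N -> (s <= 2)%N ->
  ((1 < s)%N -> lam 1%N = 0) -> (0 < k <= n)%N ->
  lam_of_row s (row_of_lam d.+1 s lam extra) k = lam k.
Proof.
move=> ds s2 lam1 k_n; rewrite /lam_of_row; case: leqP => ks.
  by rewrite mxE inordK ?subnK //; [decide_conditions | lia].
by rewrite (_ : k = 1) ?lam1 //; lia.
Qed.

Lemma row_of_lam_extra d s lam extra j : (n < j + s)%N -> (j < d.+1)%N ->
  row_of_lam d.+1 s lam extra 0 (inord j) = extra j.
Proof. by move=> js jd; rewrite mxE inordK //; decide_conditions. Qed.

Lemma der_nf_mx_linear a lam1 lam2 lam al1 al2 al be1 be2 be ga1 ga2 ga :
  (forall k, lam k = a * lam1 k + lam2 k) ->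
  al = a * al1 + al2 -> be = a * be1 + be2 -> ga = a * ga1 + ga2 ->
  der_nf_mx m lam al be ga = a *: der_nf_mx m lam1 al1 be1 ga1 + der_nf_mx m lam2 al2 be2 ga2.
Proof.
move=> lamE -> -> ->; apply/matrixP => i j; rewrite !mxE /der_nf.
case: ifP => _; first exact: lamE.
case: ifP => _; last by case: ifP => _; rewrite ?lamE; ring.
by repeat case: ifP => _; ring.
Qed.

Lemma der_nf_mx_congr lam1 lam2 al be ga :
  (forall k, (0 < k <= n)%N -> lam1 k = lam2 k) ->
  der_nf_mx m lam1 al be ga = der_nf_mx m lam2 al be ga.
Proof.
move=> E; apply/matrixP => i j; rewrite !mxE /der_nf; have := ltn_ord j.
case: ifP => _ j_n; first by rewrite E.
by do 2 (case: ifP => ? //); rewrite E //; lia.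
Qed.

Lemma der_nf_mx_eq0 lam al be ga : der_nf_mx m lam al be ga = 0 ->
  [/\ forall k, (0 < k <= n)%N -> lam k = 0, al = 0, be = 0 & ga = 0].
Proof.
move=> A0; have E i k : (0 < i <= n)%N -> (0 < k <= n)%N -> der_nf m lam al be ga i k = 0.
  by move=> i_n k_n; rewrite -coef_der_nf_mx // A0 /coef mxE.
split=> [k k_n|||]; first exact: E 1%N k _ k_n.
- by have := E n n.-2 ltac:(lia) ltac:(lia); rewrite der_nf_last; decide_conditions.
- by have := E n n.-1 ltac:(lia) ltac:(lia); rewrite der_nf_last; decide_conditions.
- by have := E n n ltac:(lia) ltac:(lia); rewrite der_nf_last; decide_conditions.
Qed.

End Dimension.

Section Parametrizations.
Variable m : nat.
Local Notation n := m.+4.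

Definition param11 (v : 'rV[C]_n.+2) : 'M[C]_n :=
  der_nf_mx m (lam_of_row 1 v) 0 (v 0 (inord n)) (v 0 (inord n.+1)).

Lemma param11_linear : linear param11.
Proof. by move=> a u v; apply: der_nf_mx_linear => *; rewrite ?lam_of_row_linear ?mxE; ring. Qed.

Lemma param11_eq0 v : param11 v = 0 -> v = 0.
Proof.
move/der_nf_mx_eq0 => [lam0 _ be0 ga0]; apply/rowP => j; rewrite mxE.
have j_lt := ltn_ord j; case: (leqP (j + 1) n) => jn; first by rewrite (lam_of_row_eq0 lam0).
rewrite -[j]inord_val; have [->|jn'] := eqVneq (j : nat) n; first exact: be0.
by rewrite (_ : (j : nat) = n.+1) //; lia.
Qed.

Lemma param11P A : is_derivation P11 A <-> exists v, A = param11 v.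
Proof.
rewrite derivationP; split=> [[lam [al [be [ga [-> /= ->]]]]] | [v ->]]; last first.
  by do 4!eexists; split; first reflexivity.
exists (row_of_lam m n.+2 1 lam (fun j => if j == n then be else ga)).
rewrite /param11 !row_of_lam_extra; try lia; decide_conditions.
by apply: der_nf_mx_congr => k k_n; rewrite lam_of_row_of_lam //; lia.
Qed.

Lemma dim_Der_P11 : dim_Der n P11 n.+2.
Proof. exact: dim_Der_param param11_linear param11_eq0 param11P. Qed.

Definition param12 (v : 'rV[C]_n) : 'M[C]_n := der_nf_mx m (lam_of_row 2 v) 0 0 (v 0 (inord n.-1)).

Lemma param12_linear : linear param12.
Proof. by move=> a u v; apply: der_nf_mx_linear => *; rewrite ?lam_of_row_linear ?mxE; ring. Qed.

Lemma param12_eq0 v : param12 v = 0 -> v = 0.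
Proof.
move/der_nf_mx_eq0 => [lam0 _ _ ga0]; apply/rowP => j; rewrite mxE.
have j_lt := ltn_ord j; case: (leqP (j + 2) n) => jn; first by rewrite (lam_of_row_eq0 lam0).
by rewrite -[j]inord_val (_ : (j : nat) = n.-1) //; lia.
Qed.

Lemma param12P A : is_derivation P12 A <-> exists v, A = param12 v.
Proof.
rewrite derivationP; split=> [[lam [al [be [ga [-> [/= -> -> l1]]]]]] | [v ->]]; last first.
  by do 4!eexists; split; first reflexivity.
exists (row_of_lam m n 2 lam (fun=> ga)).
rewrite /param12 row_of_lam_extra; try lia.
by apply: der_nf_mx_congr => k k_n; rewrite lam_of_row_of_lam //; lia.
Qed.

Lemma dim_Der_P12 : dim_Der n P12 n.
Proof. exact: dim_Der_param param12_linear param12_eq0 param12P. Qed.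

Definition param13 (v : 'rV[C]_n.+1) : 'M[C]_n :=
  der_nf_mx m (lam_of_row 1 v) 0 (v 0 (inord n)) ((n - 2)%:R * lam_of_row 1 v 1).

Lemma param13_linear : linear param13.
Proof. by move=> a u v; apply: der_nf_mx_linear => *; rewrite ?lam_of_row_linear ?mxE; ring. Qed.

Lemma param13_eq0 v : param13 v = 0 -> v = 0.
Proof.
move/der_nf_mx_eq0 => [lam0 _ be0 _]; apply/rowP => j; rewrite mxE.
have j_lt := ltn_ord j; case: (leqP (j + 1) n) => jn; first by rewrite (lam_of_row_eq0 lam0).
by rewrite -[j]inord_val (_ : (j : nat) = n) //; lia.
Qed.

Lemma param13P A : is_derivation P13 A <-> exists v, A = param13 v.
Proof.
rewrite derivationP; split=> [[lam [al [be [ga [-> [/= -> ->]]]]]] | [v ->]]; last first.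
  by do 4!eexists; split; first reflexivity.
exists (row_of_lam m n.+1 1 lam (fun=> be)).
rewrite /param13 row_of_lam_extra ?lam_of_row_of_lam; try lia.
by apply: der_nf_mx_congr => k k_n; rewrite lam_of_row_of_lam //; lia.
Qed.

Lemma dim_Der_P13 : dim_Der n P13 n.+1.
Proof. exact: dim_Der_param param13_linear param13_eq0 param13P. Qed.

Definition param14 (v : 'rV[C]_n.+1) : 'M[C]_n :=
  der_nf_mx m (lam_of_row 1 v) (- lam_of_row 1 v n) (v 0 (inord n))
    (n.-1%:R / 2%:R * lam_of_row 1 v 1).

Lemma param14_linear : linear param14.
Proof. by move=> a u v; apply: der_nf_mx_linear => *; rewrite ?lam_of_row_linear ?mxE; ring. Qed.

Lemma param14_eq0 v : param14 v = 0 -> v = 0.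
Proof.
move/der_nf_mx_eq0 => [lam0 _ be0 _]; apply/rowP => j; rewrite mxE.
have j_lt := ltn_ord j; case: (leqP (j + 1) n) => jn; first by rewrite (lam_of_row_eq0 lam0).
by rewrite -[j]inord_val (_ : (j : nat) = n) //; lia.
Qed.

Lemma param14P A : is_derivation P14 A <-> exists v, A = param14 v.
Proof.
rewrite derivationP; split=> [[lam [al [be [ga [-> [/= -> ->]]]]]] | [v ->]]; last first.
  by do 4!eexists; split; first reflexivity.
exists (row_of_lam m n.+1 1 lam (fun=> be)).
rewrite /param14 row_of_lam_extra ?lam_of_row_of_lam; try lia.
by apply: der_nf_mx_congr => k k_n; rewrite lam_of_row_of_lam //; lia.
Qed.

Lemma dim_Der_P14 : dim_Der n P14 n.+1.
Proof. exact: dim_Der_param param14_linear param14_eq0 param14P. Qed.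

Definition param15 (v : 'rV[C]_n) : 'M[C]_n :=
  der_nf_mx m (lam_of_row 2 v) (- lam_of_row 2 v n) (v 0 (inord n.-1)) 0.

Lemma param15_linear : linear param15.
Proof. by move=> a u v; apply: der_nf_mx_linear => *; rewrite ?lam_of_row_linear ?mxE; ring. Qed.

Lemma param15_eq0 v : param15 v = 0 -> v = 0.
Proof.
move/der_nf_mx_eq0 => [lam0 _ be0 _]; apply/rowP => j; rewrite mxE.
have j_lt := ltn_ord j; case: (leqP (j + 2) n) => jn; first by rewrite (lam_of_row_eq0 lam0).
by rewrite -[j]inord_val (_ : (j : nat) = n.-1) //; lia.
Qed.

Lemma param15P A : is_derivation P15 A <-> exists v, A = param15 v.
Proof.
rewrite derivationP; split=> [[lam [al [be [ga [-> [/= -> -> l1]]]]]] | [v ->]]; last first.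
  by do 4!eexists; split; first reflexivity.
exists (row_of_lam m n 2 lam (fun=> be)).
rewrite /param15 row_of_lam_extra ?lam_of_row_of_lam //; try lia.
by apply: der_nf_mx_congr => k k_n; rewrite lam_of_row_of_lam //; lia.
Qed.

Lemma dim_Der_P15 : dim_Der n P15 n.
Proof. exact: dim_Der_param param15_linear param15_eq0 param15P. Qed.

End Parametrizations.

Theorem lemma5p2 (n : nat) (hn : (3 < n)%N) :
  (* (a) P_{1,1}^n *)
  ((forall A : 'M[C]_n, is_derivation P11 A ->
     exists (lam : nat -> C) (a b : C),
       phi_e A 1 = \sum_(1 <= k < n.+1) lam k *: e n k /\
       (forall i, (2 <= i <= n.-1)%N ->
          phi_e A i = \sum_(i <= k < n) (i%:R * lam (k - i + 1)%N) *: e n k) /\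
       phi_e A n = a *: e n n.-1 + b *: e n n)
   /\ dim_Der n P11 (n + 2)) /\
  (* (b) P_{1,2}^n *)
  ((forall A : 'M[C]_n, is_derivation P12 A ->
     exists (lam : nat -> C) (b : C),
       phi_e A 1 = \sum_(2 <= k < n.+1) lam k *: e n k /\
       (forall i, (2 <= i <= n.-1)%N ->
          phi_e A i = \sum_(i.+1 <= k < n) (i%:R * lam (k - i + 1)%N) *: e n k) /\
       phi_e A n = b *: e n n)
   /\ dim_Der n P12 n) /\
  (* (c) P_{1,3}^n *)
  ((forall A : 'M[C]_n, is_derivation P13 A ->
     exists (lam : nat -> C) (a : C),
       phi_e A 1 = \sum_(1 <= k < n.+1) lam k *: e n k /\
       (forall i, (2 <= i <= n.-1)%N ->
          phi_e A i = \sum_(i <= k < n) (i%:R * lam (k - i + 1)%N) *: e n k) /\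
       phi_e A n = a *: e n n.-1 + ((n - 2)%:R * lam 1%N) *: e n n)
   /\ dim_Der n P13 (n + 1)) /\
  (* (d) P_{1,4}^n *)
  ((forall A : 'M[C]_n, is_derivation P14 A ->
     exists (lam : nat -> C) (a : C),
       phi_e A 1 = \sum_(1 <= k < n.+1) lam k *: e n k /\
       (forall i, (2 <= i <= n.-1)%N ->
          phi_e A i = \sum_(i <= k < n) (i%:R * lam (k - i + 1)%N) *: e n k) /\
       phi_e A n = - lam n *: e n (n - 2) + a *: e n n.-1
                   + ((n.-1)%:R / 2%:R * lam 1%N) *: e n n)
   /\ dim_Der n P14 (n + 1)) /\
  (* (e) P_{1,5}^n *)
  ((forall A : 'M[C]_n, is_derivation P15 A ->
     exists (lam : nat -> C) (a : C),
       phi_e A 1 = \sum_(2 <= k < n.+1) lam k *: e n k /\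
       (forall i, (2 <= i <= n.-1)%N ->
          phi_e A i = \sum_(i.+1 <= k < n) (i%:R * lam (k - i + 1)%N) *: e n k) /\
       phi_e A n = - lam n *: e n (n - 2) + a *: e n n.-1)
   /\ dim_Der n P15 n).
Proof.
case: n hn => [|[|[|[|m]]]] // _.
split.
  split; last by rewrite addn2; exact: dim_Der_P11.
  move=> A /derivationP [lam [_ [be [ga [-> /= ->]]]]].
  have [? ? ->] := phi_e_der_nf_mx m lam 0 be ga.
  by exists lam, be, ga; rewrite scale0r add0r.
split.
  split; last exact: dim_Der_P12.
  move=> A /derivationP [lam [_ [_ [ga [-> [/= -> -> l1]]]]]].
  have [? ? ->] := phi_e_der_nf_mx_shift m 0 0 ga l1.
  by exists lam, ga; rewrite !scale0r !add0r.
split.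
  split; last by rewrite addn1; exact: dim_Der_P13.
  move=> A /derivationP [lam [_ [be [_ [-> [/= -> ->]]]]]].
  have [? ? ->] := phi_e_der_nf_mx m lam 0 be ((m.+4 - 2)%:R * lam 1%N).
  by exists lam, be; rewrite scale0r add0r.
split.
  split; last by rewrite addn1; exact: dim_Der_P14.
  move=> A /derivationP [lam [_ [be [_ [-> [/= -> ->]]]]]].
  have [? ? ->] := phi_e_der_nf_mx m lam (- lam m.+4) be (m.+3%:R / 2%:R * lam 1%N).
  by exists lam, be.
split; last exact: dim_Der_P15.
move=> A /derivationP [lam [_ [be [_ [-> [/= -> -> l1]]]]]].
have [? ? ->] := phi_e_der_nf_mx_shift m (- lam m.+4) be 0 l1.
by exists lam, be; rewrite scale0r addr0.
Qed.
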